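(* If $G$ is a connected, nontraceable detour graph, then $\tau(G)\ge 9$. (In particular such a graph has at least $10$ vertices.)
   Context: All graphs are finite and simple. The order of a path is its number of vertices. For a vertex $v$ of $G$, $\tau(v)$ is the order of a longest path in $G$ having $v$ as an endvertex, and $\tau(G)$ is the order of a longest path in $G$. A graph is nontraceable if it has no path containing all its vertices. A detour graph is a graph in which all vertices have the same value of $\tau(v)$. *)

From mathcomp Require Import all_boot.
Set Implicit Arguments. Unset Strict Implicit. Unset Printing Implicit Defensive.

Definition simple_graph (T : finType) (e : rel T) : Prop :=
  symmetric e /\ irreflexive e.

Definition gpath (T : finType) (e : rel T) (s : seq T) : bool :=
  match s with
  | [::] => false
  | x :: s' => path e x s' && uniq s
  end.

Definition endvertex (T : finType) (v : T) (s : seq T) : bool :=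
  (s != [::]) && ((head v s == v) || (last v s == v)).

(* tau(v): the order of a longest path having v as an endvertex.
   Paths have order at most #|T|, so we take the max over n <= #|T|. *)
Definition tau_v (T : finType) (e : rel T) (v : T) : nat :=
  \max_(n < #|T|.+1 | [exists t : n.-tuple T, gpath e t && endvertex v t]) n.

Definition tau_G (T : finType) (e : rel T) : nat :=
  \max_(n < #|T|.+1 | [exists t : n.-tuple T, gpath e t]) n.

(* connected graph: nonempty (graphs have a nonempty vertex set) and any two
   vertices are joined by a walk *)
Definition connected (T : finType) (e : rel T) : Prop :=
  0 < #|T| /\ forall x y : T, connect e x y.

Definition nontraceable (T : finType) (e : rel T) : Prop :=
  ~ exists s : seq T, gpath e s /\ (forall x : T, x \in s).

Definition detour_graph (T : finType) (e : rel T) : Prop :=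
  forall u v : T, tau_v e u = tau_v e v.

From mathcomp Require Import all_boot zify.

Set Implicit Arguments. Unset Strict Implicit. Unset Printing Implicit Defensive.

(* Let k = tau(G). As G is a detour graph, every vertex is an endvertex of a
   path of order k, and no path has order k + 1; as G is nontraceable, k is less
   than the number of vertices, so by connectivity some vertex of a longest path
   has a neighbour off it. For k <= 8 these constraints are contradictory, which
   a finite search establishes: it builds partial pictures of G on coded
   vertices, lays out a longest path, adds an edge leaving it, and then twice
   picks a vertex and enumerates every way a path of order k from that vertex
   can sit in the picture; in every branch a path of order k + 1 appears. Only
   these paths of order k + 1 are trusted, and an injective edge-preserving map
   from the picture into G carries each of them to G. *)

Lemma gpath_rev (T : finType) (e : rel T) (s : seq T) :
  symmetric e -> gpath e s -> gpath e (rev s).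
Proof.
move=> e_sym; case: s => // a q /andP[pq uq].
rewrite lastI rev_rcons /gpath -rev_rcons -lastI rev_uniq uq andbT rev_path.
by apply: sub_path pq => x y; rewrite /= e_sym.
Qed.

Lemma gpath_size (T : finType) (e : rel T) (s : seq T) : gpath e s -> size s <= #|T|.
Proof. by case: s => // a q /andP[_ /card_uniqP <-]; apply: max_card. Qed.

Section MaxOrder.
Variables (T : finType) (p : pred (seq T)).

Definition max_order := \max_(n < #|T|.+1 | [exists t : n.-tuple T, p t]) n.

Lemma leq_max_order s : p s -> size s <= #|T| -> size s <= max_order.
Proof.
move=> ps; rewrite -ltnS => lt_s.
apply: (@leq_bigmax_cond _ _ (fun n : 'I_#|T|.+1 => nat_of_ord n) (Ordinal lt_s)).
by apply/existsP; exists (in_tuple s).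
Qed.

Lemma max_order_attained s : p s -> size s <= #|T| ->
  exists2 t : seq T, p t & size t = max_order.
Proof.
move=> ps; rewrite -ltnS => lt_s.
have [|n /existsP[t pt] max_n] :=
  @eq_bigmax_cond _ [pred n : 'I_#|T|.+1 | [exists t : n.-tuple T, p t]] val.
  by apply/card_gt0P; exists (Ordinal lt_s); apply/existsP; exists (in_tuple s).
by exists t; rewrite // size_tuple; apply: esym max_n.
Qed.

End MaxOrder.

Section Tau.
Variables (T : finType) (e : rel T).

Lemma tau_GE : tau_G e = max_order (gpath e).
Proof. by []. Qed.

Lemma tau_vE v : tau_v e v = max_order (fun s => gpath e s && endvertex v s).
Proof. by []. Qed.

Lemma gpath_le_tau_G s : gpath e s -> size s <= tau_G e.
Proof. by move=> es; rewrite tau_GE leq_max_order // (gpath_size es). Qed.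

Lemma endvertex_le_tau_v v s : gpath e s -> endvertex v s -> size s <= tau_v e v.
Proof. by move=> es vs; rewrite tau_vE leq_max_order ?es // (gpath_size es). Qed.

Lemma longest_path_exists (x : T) : exists2 s, gpath e s & size s = tau_G e.
Proof.
apply: (@max_order_attained _ _ [:: x]) => //=.
by apply/card_gt0P; exists x.
Qed.

Lemma tau_v_attained v :
  exists s, [/\ gpath e s, endvertex v s & size s = tau_v e v].
Proof.
rewrite tau_vE; have [||s /andP[es vs] <-] :=
  @max_order_attained _ (fun s => gpath e s && endvertex v s) [:: v].
- by rewrite /endvertex /= eqxx.
- by apply/card_gt0P; exists v.
by exists s.
Qed.

Lemma endvertex_head_path v s : symmetric e -> gpath e s -> endvertex v s ->
  exists s', [/\ gpath e s', size s' = size s & head v s' = v].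
Proof.
move=> e_sym es /andP[s_nil /orP[/eqP hv | /eqP lv]]; first by exists s.
exists (rev s); split; rewrite ?size_rev ?gpath_rev //.
by case/lastP: s s_nil lv es => // q x _; rewrite last_rcons rev_rcons => ->.
Qed.

Lemma detour_head_path : symmetric e -> detour_graph e ->
  forall x, exists s, [/\ gpath e s, size s = tau_G e & head x s = x].
Proof.
move=> e_sym detour x.
have [P eP sP] := longest_path_exists x.
have tau_P : tau_G e <= tau_v e (head x P).
  rewrite -sP endvertex_le_tau_v // /endvertex.
  by case: P eP {sP} => //= a q _; rewrite eqxx.
have [s [es vs ss]] := tau_v_attained x.
have {}ss : size s = tau_G e.
  by apply/eqP; rewrite eqn_leq gpath_le_tau_G // ss (detour x (head x P)).
have [s' [es' s's hs']] := endvertex_head_path e_sym es vs.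
by exists s'; rewrite s's.
Qed.

Lemma nontraceable_tau_G_lt (x : T) : nontraceable e -> tau_G e < #|T|.
Proof.
move=> ntr; rewrite ltnNge; apply/negP => le_T.
have [P eP sP] := longest_path_exists x.
apply: ntr; exists P; split=> // y.
case: P eP sP => // a q /andP[_ uq] sP.
have /subset_cardP/(_ (subset_predT _)) : #|a :: q| = #|T|.
  by apply/eqP; rewrite eqn_leq max_card (card_uniqP uq) sP.
by move=> /(_ y); rewrite inE => ->.
Qed.

End Tau.

(* A partial picture of G: vertices coded [0 .. size g - 1], with adjacency
   lists. The search procedures below are unverified: soundness only relies on
   the certificates they return being checked by [long_path]. *)
Definition adjacency := seq (seq nat).

Definition nbr (g : adjacency) (v : nat) : seq nat := nth [::] g v.

(* [vm_compute] evaluates function arguments eagerly, so [&&] and [||] do not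
   short-circuit there: the search procedures below branch with explicit [if]s. *)
Fixpoint memn (x : nat) (l : seq nat) : bool :=
  if l is y :: l' then (if eqn x y then true else memn x l') else false.

Fixpoint all_lazy (a : pred nat) (s : seq nat) : bool :=
  if s is x :: s' then (if a x then all_lazy a s' else false) else true.

Fixpoint has_lazy (a : pred nat) (s : seq nat) : bool :=
  if s is x :: s' then (if a x then true else has_lazy a s') else false.

Lemma memnE x l : memn x l = (x \in l).
Proof. by elim: l => //= y l ->; rewrite inE -[eqn x y]/(x == y); case: (x == y). Qed.

Lemma all_lazyE a s : all_lazy a s = all a s.
Proof. by elim: s => //= x s ->; case: (a x). Qed.

Lemma has_lazyE a s : has_lazy a s = has a s.
Proof. by elim: s => //= x s ->; case: (a x). Qed.

(* Paths are stored backwards: the head is the end being extended. *)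
Fixpoint extend_path (g : adjacency) (n : nat) (p : seq nat) {struct n}
    : option (seq nat) :=
  if n is n'.+1 then
    let fix try (l : seq nat) :=
      if l is u :: l' then
        if memn u p then try l' else
        if extend_path g n' (u :: p) is Some q then Some q else try l'
      else None in
    try (nbr g (head 0 p))
  else Some p.

(* A path of order [L] through the edge [v u]: grow a path [B] ending at [v]
   and avoiding [u] (its head is the end being grown), then extend the path
   [rcons B u] beyond [u]. *)
Fixpoint path_through (g : adjacency) (L fuel u : nat) (B : seq nat) {struct fuel}
    : option (seq nat) :=
  if extend_path g (L - (size B).+1) (u :: rev B) is Some q then Some q else
  if fuel is fuel'.+1 then
    let fix try (l : seq nat) :=
      if l is w :: l' then
        if memn w B || eqn w u then try l' else
        if path_through g L fuel' u (w :: B) is Some q then Some q else try l'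
      else None in
    try (nbr g (head 0 B))
  else None.

Definition long_path (g : adjacency) (L : nat) (q : seq nat) : bool :=
  if q is a :: q' then
    [&& path (fun x y => y \in nbr g x) a q', uniq q,
        all (fun x => x < size g) q & L <= size q]
  else false.

Definition has_long_path_via (g : adjacency) (L v u : nat) : bool :=
  if path_through g L L u [:: v] is Some q then long_path g L q else false.

Definition add_edge (g : adjacency) (v u : nat) : adjacency :=
  if memn u (nbr g v) then g else
  let g1 := if eqn u (size g) then rcons g [::] else g in
  let g2 := set_nth [::] g1 v (u :: nbr g1 v) in
  set_nth [::] g2 u (v :: nbr g2 u).

Lemma nbr_add_edge g v u a b : b \in nbr (add_edge g v u) a ->
  [\/ b \in nbr g a, a = v /\ b = u | a = u /\ b = v].
Proof.
rewrite /add_edge memnE; case: ifP => [_ ?|_]; first by constructor 1.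
set g1 := (if _ then _ else _).
have g1E c : nbr g1 c = nbr g c.
  rewrite /g1; case: ifP => // _; rewrite /nbr nth_rcons; case: ltnP => // gc.
  by rewrite if_same nth_default.
rewrite /nbr !nth_set_nth /= -!/(nbr _ _) !g1E.
case: (eqVneq a u) => [->|_].
  rewrite inE => /orP[/eqP->|]; first by constructor 3.
  case: (eqVneq u v) => [->|_]; last by constructor 1.
  by rewrite inE => /orP[/eqP->|]; [constructor 2 | constructor 1].
rewrite /nbr nth_set_nth /= -!/(nbr _ _) g1E.
case: (eqVneq a v) => [->|_]; last by constructor 1.
by rewrite inE => /orP[/eqP->|]; [constructor 2 | constructor 1].
Qed.

Lemma size_add_edge g v u : v < size g -> u <= size g ->
  (u \in nbr g v -> u < size g) -> size (add_edge g v u) = maxn (size g) u.+1.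
Proof.
move=> vg ug uvg; rewrite /add_edge memnE; case: ifP => [/uvg ?|_]; first by lia.
by rewrite !size_set_nth; case: ifP => [/eqP|_]; rewrite ?size_rcons; lia.
Qed.

(* Every continuation by [r] vertices of a path ending at [v] and visiting
   [vis] (each new vertex an unvisited code or the fresh code [size g]) either
   closes a path of order [L + 1] or ends in a picture satisfying [W]. *)
Fixpoint refute_extensions (W : adjacency -> bool) (L : nat) (g : adjacency)
    (v : nat) (vis : seq nat) (r : nat) {struct r} : bool :=
  if r is r'.+1 then
    all_lazy (fun u => if memn u vis then true else
        let g' := add_edge g v u in
        if has_long_path_via g' L.+1 v u then true
        else refute_extensions W L g' u (u :: vis) r')
      (iota 0 (size g).+1)
  else W g.

Lemma refute_extensionsS W L g v vis r :
  refute_extensions W L g v vis r.+1 =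
  all (fun u => if memn u vis then true else
         let g' := add_edge g v u in
         if has_long_path_via g' L.+1 v u then true
         else refute_extensions W L g' u (u :: vis) r)
    (iota 0 (size g).+1).
Proof. exact: all_lazyE. Qed.

(* Candidates for the next starting vertex are those not yet seen to start a
   path of order [L], of largest degree first. *)
Definition candidates (g : adjacency) (L : nat) : seq nat :=
  sort (fun x y => size (nbr g y) <= size (nbr g x))
    [seq x <- iota 0 (size g) | extend_path g L.-1 [:: x] == None].

Fixpoint refute (L d : nat) (g : adjacency) {struct d} : bool :=
  if d is d'.+1 then
    has_lazy (fun x => refute_extensions (refute L d') L g x [:: x] L.-1)
      (candidates g L)
  else false.

Definition reversal_closed (g : adjacency) : bool :=
  all (fun a => all (fun b => memn ((size g).-1 - b) (nbr g ((size g).-1 - a)))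
                   (nbr g a))
    (iota 0 (size g)).

(* When [g] is invariant under reversing the codes, the edge leaving the
   picture may be assumed to start in its first half. *)
Definition refute_exit (L d : nat) (g : adjacency) : bool :=
  if [&& size g <= L, 0 < size g & reversal_closed g] then
    all_lazy (fun i => if i + i < size g then
        let g' := add_edge g i (size g) in
        if has_long_path_via g' L.+1 i (size g) then true else refute L d g'
      else true)
      (iota 0 (size g))
  else false.

Definition refute_longest_path (L d : nat) : bool :=
  refute_extensions (refute_exit L d) L [:: [::]] 0 [:: 0] L.-1.

Lemma path_exit_edge (T : eqType) (e : rel T) (S : pred T) x p :
  S x -> path e x p -> ~~ S (last x p) -> exists y z, [/\ S y, ~~ S z & e y z].
Proof.
elim: p x => [|z p IH] x /= Sx; first by rewrite Sx.
case/andP=> exz pz; case: (boolP (S z)) => [Sz | nSz _]; first exact: IH.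
by exists x, z.
Qed.

Section Soundness.
Variables (T : finType) (e : rel T) (k : nat).
Hypothesis e_sym : symmetric e.
Hypothesis gpath_le_k : forall s, gpath e s -> size s <= k.

Definition embeds (f : nat -> T) (g : adjacency) : Prop :=
  (forall i j, i < size g -> j < size g -> f i = f j -> i = j) /\
  (forall a b, b \in nbr g a -> [/\ a < size g, b < size g & e (f a) (f b)]).

Lemma embeds_no_long_path f g q : embeds f g -> ~~ long_path g k.+1 q.
Proof.
case=> f_inj f_edge; apply/negP; case: q => // a q /and4P[pq uq qg kq].
suff /gpath_le_k : gpath e (map f (a :: q)) by rewrite size_map; lia.
change (path e (f a) (map f q) && uniq (map f (a :: q))).
rewrite path_map map_inj_in_uniq ?uq ?andbT.
  by apply: sub_path pq => x y /f_edge[].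
by move=> x y /(allP qg) xg /(allP qg) yg; apply: f_inj.
Qed.

Lemma embeds_no_long_path_via f g v u : embeds f g -> ~~ has_long_path_via g k.+1 v u.
Proof.
move=> fg; rewrite /has_long_path_via; case: path_through => // q.
exact: embeds_no_long_path fg.
Qed.

Lemma embeds_add_edge f f' g v u : embeds f g -> v < size g -> u <= size g ->
  (forall i, i < size g -> f' i = f i) ->
  (u = size g -> forall i, i < size g -> f' i <> f' u) ->
  e (f' v) (f' u) -> embeds f' (add_edge g v u).
Proof.
case=> f_inj f_edge vg ug f'f f'u f'vu.
have size_g' : size (add_edge g v u) = maxn (size g) u.+1.
  by apply: size_add_edge => // /f_edge[].
split=> [i j|a b]; rewrite size_g'.
  move=> i_lt j_lt; case: (ltnP i (size g)) => ig; case: (ltnP j (size g)) => jg.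
  - by rewrite !f'f //; apply: f_inj.
  - have [-> eu] : j = u /\ u = size g by lia.
    by move=> /(f'u eu _ ig).
  - have [-> eu] : i = u /\ u = size g by lia.
    by move=> /esym /(f'u eu _ jg).
  - lia.
case/nbr_add_edge => [/f_edge[ag bg ab] | [-> ->] | [-> ->]].
- by rewrite !f'f //; split => //; lia.
- by split => //; lia.
- by rewrite e_sym; split => //; lia.
Qed.

Lemma next_vertex_code (f : nat -> T) (g : adjacency) (vis : seq nat) (y : T) :
  all (fun x => x < size g) vis -> y \notin map f vis ->
  exists u f', [/\ u <= size g, f' u = y, forall i, i < size g -> f' i = f i,
    u = size g -> forall i, i < size g -> f' i <> y & u \notin vis].
Proof.
move=> visg y_vis; case: (boolP (y \in map f (iota 0 (size g)))).
  case/mapP=> i; rewrite mem_iota /= add0n => ig y_fi.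
  exists i, f; split => //; first exact: ltnW.
  - by move=> ei; move: ig; rewrite ei ltnn.
  - by apply: contraNN y_vis; rewrite y_fi; apply: map_f.
move=> y_g; exists (size g), (fun j => if j == size g then y else f j); split.
- by [].
- by rewrite eqxx.
- by move=> i ig; rewrite (ltn_eqF ig).
- move=> _ i ig; rewrite (ltn_eqF ig) => fiy; move: y_g.
  by rewrite -fiy map_f // mem_iota.
- by apply/negP => /(allP visg); rewrite ltnn.
Qed.

Section Extensions.
Variable W : adjacency -> bool.
Hypothesis W_sound : forall f g, embeds f g -> ~~ W g.

Lemma refute_extensions_sound rest : forall g f v vis,
  embeds f g -> v < size g -> all (fun x => x < size g) vis ->
  path e (f v) rest -> uniq (map f vis ++ rest) ->
  ~~ refute_extensions W k g v vis (size rest).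
Proof.
elim: rest => [|y rest IH] g f v vis fg vg visg; first by move=> _ _; apply: W_sound fg.
case/andP=> fvy yrest uniq_vis.
have y_vis : y \notin map f vis.
  by move: uniq_vis; rewrite cat_uniq => /and3P[_ /hasPn /(_ y (mem_head _ _)) /= ->].
have uniq_y : uniq (y :: map f vis ++ rest) by move: uniq_vis; rewrite -cat1s uniq_catCA.
have [u [f' [ug f'u f'f f'new u_vis]]] := next_vertex_code visg y_vis.
have f'g : embeds f' (add_edge g v u).
  apply: (embeds_add_edge fg vg ug f'f).
  - by move=> /f'new + i ig; rewrite f'u; apply.
  - by rewrite f'f // f'u.
have size_g' : size (add_edge g v u) = maxn (size g) u.+1.
  by apply: size_add_edge => //; case: fg => _ /[apply] [[]].
rewrite refute_extensionsS; apply/allPn; exists u; first by rewrite mem_iota.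
rewrite memnE (negbTE u_vis) /= (negbTE (embeds_no_long_path_via _ _ f'g)).
apply: IH f'g _ _ _ _.
- by rewrite size_g'; lia.
- rewrite /= size_g' leq_max ltnSn orbT /=.
  by apply/allP => x /(allP visg) xg; lia.
- by rewrite f'u.
- suff -> : map f' (u :: vis) = y :: map f vis by [].
  by rewrite /= f'u; congr cons; apply/eq_in_map => x /(allP visg) /f'f.
Qed.

End Extensions.

Hypothesis head_path : forall x, exists s, [/\ gpath e s, size s = k & head x s = x].
Hypothesis e_connected : forall x y, connect e x y.
Hypothesis k_lt_card : k < #|T|.

Lemma refute_extensions_from_sound W f g x :
  (forall f g, embeds f g -> ~~ W g) -> embeds f g -> x < size g ->
  ~~ refute_extensions W k g x [:: x] k.-1.
Proof.
move=> W_sound fg xg.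
have [[|a rest] [path_s size_s /= a_x]] := head_path (f x) => //.
case/andP: path_s; rewrite a_x => pa ua.
have -> : k.-1 = size rest by rewrite -size_s.
by apply: (refute_extensions_sound W_sound (f := f)); rewrite //= xg.
Qed.

Lemma refute_sound d f g : embeds f g -> ~~ refute k d g.
Proof.
elim: d f g => [//|d IH] f g fg /=; rewrite has_lazyE; apply/hasPn => x.
rewrite mem_sort mem_filter mem_iota => /and3P[_ _ xg].
exact: refute_extensions_from_sound IH fg xg.
Qed.

Lemma embeds_reversal (f : nat -> T) (g : adjacency) :
  reversal_closed g -> embeds f g -> embeds (fun j => f ((size g).-1 - j)) g.
Proof.
move=> rev_g [f_inj f_edge]; split=> [i j ig jg /f_inj|a b ba]; first lia.
have [ag bg _] := f_edge _ _ ba.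
have := allP (allP rev_g a _) b ba; rewrite mem_iota ag memnE => /(_ erefl).
by case/f_edge.
Qed.

Lemma embeds_exit_edge (f : nat -> T) (g : adjacency) :
  size g <= k -> 0 < size g ->
  exists i z, [/\ i < size g, z \notin map f (iota 0 (size g)) & e (f i) z].
Proof.
set S := map f (iota 0 (size g)) => g_k g_pos.
have /subsetPn[y _ yS] : ~~ (T \subset S).
  apply: contraL k_lt_card => /subset_leq_card T_S; rewrite -leqNgt.
  by rewrite (leq_trans T_S) // (leq_trans (card_size S)) // size_map size_iota.
have f0S : f 0 \in S by rewrite map_f // mem_iota.
have /connectP[p fp ly] := e_connected (f 0) y.
have pS : last (f 0) p \notin S by rewrite -ly.
have [x [z [/mapP[i] + -> zS xz]]] :=
  @path_exit_edge _ e (fun t => t \in S) _ _ f0S fp pS.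
by rewrite mem_iota => ig; exists i, z.
Qed.

Lemma refute_exit_sound d f g : embeds f g -> ~~ refute_exit k d g.
Proof.
move=> fg; rewrite /refute_exit; case: ifP => // /and3P[g_k g_pos rev_g].
rewrite all_lazyE; apply/allPn.
have [i [z [ig zS fiz]]] := embeds_exit_edge f g_k g_pos.
have [h [j [hg hj jg hS]]] : exists h j, [/\ embeds h g, h j = f i, j + j < size g &
    forall l, l < size g -> h l \in map f (iota 0 (size g))].
  case: (ltnP (i + i) (size g)) => ii.
    by exists f, i; split=> // l lg; rewrite map_f // mem_iota.
  exists (fun j => f ((size g).-1 - j)), ((size g).-1 - i); split.
  - exact: embeds_reversal.
  - by congr f; lia.
  - lia.
  - by move=> l lg; rewrite map_f // mem_iota; lia.
exists j; first by rewrite mem_iota; lia.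
have h'g : embeds (fun l => if l == size g then z else h l) (add_edge g j (size g)).
  apply: embeds_add_edge hg _ (leqnn _) _ _ _.
  - lia.
  - by move=> l lg; rewrite (ltn_eqF lg).
  - by move=> _ l lg; rewrite (ltn_eqF lg) eqxx => hlz; move: zS; rewrite -hlz hS.
  - by rewrite eqxx ifF ?hj //; apply: ltn_eqF; lia.
rewrite jg /= (negbTE (embeds_no_long_path_via _ _ h'g)).
exact: refute_sound h'g.
Qed.

Lemma refute_longest_path_sound d : ~~ refute_longest_path k d.
Proof.
have /card_gt0P[x _] : 0 < #|T| by lia.
apply: (refute_extensions_from_sound (@refute_exit_sound d) (f := fun=> x)) => //.
split=> [[|[]] // [|[]] //|[|a] b]; by rewrite /nbr /= ?nth_nil.
Qed.

End Soundness.

Lemma refute_longest_path_small : all (fun k => refute_longest_path k 2) (iota 1 8).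
Proof. vm_cast_no_check (erefl true). Qed.

Unset Implicit Arguments.

Theorem theorem2p4 (T : finType) (e : rel T) :
  simple_graph e -> connected e -> nontraceable e -> detour_graph e ->
  9 <= tau_G e.
Proof.
move=> [e_sym _] [/card_gt0P[x _] e_connected] ntr detour.
have k_pos : 0 < tau_G e by apply: (gpath_le_tau_G (s := [:: x])).
have := refute_longest_path_sound e_sym (@gpath_le_tau_G _ e)
  (detour_head_path e_sym detour) e_connected (nontraceable_tau_G_lt x ntr) 2.
apply: contraR; rewrite -ltnNge => k_small.
by apply: (allP refute_longest_path_small); rewrite mem_iota; lia.
Qed.
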